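(* For every chordal graph $G$, $\operatorname{box}(G)\le \omega(G)+1\le \Delta(G)+2$.
   Context: A graph is chordal if every cycle of length at least 4 has a chord (an edge joining two non-consecutive vertices of the cycle). $\omega(G)$ is the clique number (maximum size of a clique) and $\Delta(G)$ is the maximum degree. The boxicity $\operatorname{box}(G)$ is the minimum $b$ such that $G$ is the intersection graph of axis-parallel boxes in $\mathbb{R}^b$ (products of $b$ closed intervals), one box per vertex. *)

From HB Require Import structures.
From mathcomp Require Import all_boot all_order all_algebra.
From mathcomp Require Import reals.
Set Implicit Arguments. Unset Strict Implicit. Unset Printing Implicit Defensive.
Import Order.TTheory GRing.Theory Num.Theory.

(* A finite simple graph: vertex type T : finType, adjacency e : rel T,
   assumed symmetric and irreflexive (these are hypotheses of the theorem). *)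

Section Graphs.
Variables (T : finType) (e : rel T).

Definition is_clique (S : {set T}) : bool :=
  [forall x in S, forall y in S, (x != y) ==> e x y].

Definition clique_number : nat :=
  \max_(S : {set T} | is_clique S) #|S|.

Definition max_degree : nat :=
  \max_(v : T) #|[set u | e v u]|.

Definition is_graph_cycle (s : seq T) : bool := uniq s && cycle e s.

Definition has_chord (s : seq T) : Prop :=
  exists x y, [&& x \in s, y \in s, x != y, e x y,
                  y != next s x & x != next s y].

Definition chordal : Prop :=
  forall s : seq T, is_graph_cycle s -> 4 <= size s -> has_chord s.

(* Box representation in R^b: vertex v gets the box
   prod_{i < b} [l v i, r v i] (closed nonempty intervals), and distinct
   vertices are adjacent iff their boxes intersect. *)
Definition box_representation (R : realType) (b : nat)
    (l r : T -> 'I_b -> R) : Prop :=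
  (forall v i, l v i <= r v i)%R /\
  (forall u v, u != v ->
     (e u v <-> forall i, (l u i <= r v i)%R /\ (l v i <= r u i)%R)).

Definition has_box_dim (R : realType) (b : nat) : Prop :=
  exists l r : T -> 'I_b -> R, box_representation l r.

(* box(G) <= k : the minimum dimension b admitting a box representation is
   at most k, i.e. some b <= k admits one. *)
Definition boxicity_le (R : realType) (k : nat) : Prop :=
  exists b, b <= k /\ has_box_dim R b.

End Graphs.

From mathcomp Require Import all_boot all_order all_algebra.
From mathcomp Require Import reals.
From mathcomp Require Import zify.

(* A chordal graph has an ordering [ord] of its vertices in which the earlier
   neighbours of every vertex form a clique (repeatedly remove a simplicial vertex,
   which exists by Dirac's lemma).  Colour greedily along [ord] with omega colours
   and let the parent of [v] be its latest earlier neighbour: adjacent vertices are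
   then ancestor-related in this elimination forest, and if [w] is an earlier
   neighbour of [v], every vertex between [w] and [v] on the forest path is adjacent
   to [w].  One coordinate nests the intervals of the forest, separating all pairs
   that are not ancestor-related.  For each colour [k] one more coordinate makes
   the vertices of colour [k] points and stretches every other vertex from its
   earlier neighbour of colour [k] (or itself) to the right end; it separates a
   non-adjacent pair [u], [v] with [u] an ancestor of [v] and [c u = k].  Finally
   omega <= Delta + 1 because a clique lies in the closed neighbourhood of any of
   its vertices. *)

Set Implicit Arguments. Unset Strict Implicit. Unset Printing Implicit Defensive.
Import Num.Theory.

Section NextInCycle.
Variable T : eqType.

Lemma next_cat_cons (b u : T) t1 t2 :
  uniq (b :: t1 ++ u :: t2) -> next (b :: t1 ++ u :: t2) u = head b t2.
Proof.
rewrite cons_uniq => /andP[bt U].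
have bu : (b == u) = false by apply: contraNF bt => /eqP ->; rewrite mem_cat mem_head orbT.
rewrite next_nth !(inE, mem_cat) eqxx !orbT /= bu index_cat.
move: U; rewrite cat_uniq => /and3P[_ /hasPn/(_ u (mem_head _ _)) /= /negbTE -> _].
by rewrite /= eqxx addn0 nth_cat ltnNge leqnSn subSnn /= nth0.
Qed.

Lemma next_head (b : T) t : next (b :: t) b = head b t.
Proof. by rewrite next_nth mem_head /= eqxx nth0. Qed.

Lemma next_last (b : T) t : uniq (b :: t) -> t != [::] -> next (b :: t) (last b t) = b.
Proof. by case/lastP: t => // t y U _; rewrite last_rcons -cats1 next_cat_cons ?cats1. Qed.

End NextInCycle.

Lemma sorted_shortcut (T : eqType) (e : rel T) t1 u t2 v t3 :
  sorted e (t1 ++ u :: t2 ++ v :: t3) -> e u v -> sorted e (t1 ++ u :: v :: t3).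
Proof.
rewrite !sorted_cat_cons => /andP[-> /=].
by rewrite cat_path /= => /and3P[_ _ ->] ->.
Qed.

Section Graphs.
Variables (T : finType) (e : rel T).

Lemma cliqueP (S : {set T}) :
  reflect {in S &, forall x y, x != y -> e x y} (is_clique e S).
Proof.
apply: (iffP forall_inP) => [cS x y xS yS | cS x xS].
  by move/forall_inP/(_ y yS)/implyP: (cS x xS).
by apply/forall_inP => y yS; apply/implyP; apply: cS.
Qed.

Lemma clique_adj (S : {set T}) x y : is_clique e S -> x \in S -> y \in S -> x != y -> e x y.
Proof. by move/cliqueP; apply. Qed.

Lemma clique_subset (A B : {set T}) : A \subset B -> is_clique e B -> is_clique e A.
Proof. by move=> /subsetP AB /cliqueP cB; apply/cliqueP => x y /AB xB /AB; apply: cB. Qed.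

Lemma clique_set0 : is_clique e set0.
Proof. by apply/cliqueP => x; rewrite inE. Qed.

Lemma clique_card_le (S : {set T}) : is_clique e S -> #|S| <= clique_number e.
Proof. exact: leq_bigmax_cond. Qed.

Lemma clique_number_le_max_degree : clique_number e <= (max_degree e).+1.
Proof.
apply/bigmax_leqP => S /cliqueP cS.
have [->|[x xS]] := set_0Vmem S; first by rewrite cards0.
rewrite (cardsD1 x S) xS ltnS; apply: leq_trans (leq_bigmax x).
by apply/subset_leq_card/subsetP => y; rewrite !inE => /andP[yx yS]; rewrite cS // eq_sym.
Qed.

Definition induced (U : {set T}) : rel T := [rel x y | [&& x \in U, y \in U & e x y]].

Lemma connect_induced_in (U : {set T}) x y : x \in U -> connect (induced U) x y -> y \in U.
Proof.
move=> xU /connectP[p]; case/lastP: p => [_ -> // | p z].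
by rewrite rcons_path last_rcons => /andP[_ /and3P[_ zU _] ->].
Qed.

Definition boundary (S A : {set T}) : {set T} := [set x in S :\: A | [exists w in A, e w x]].

Lemma mem_boundary (S A : {set T}) w x :
  x \in S -> x \notin A -> w \in A -> e w x -> x \in boundary S A.
Proof. by move=> xS xA wA ewx; rewrite !inE xS xA; apply/exists_inP; exists w. Qed.

Definition simplicial (S : {set T}) (s : T) : bool := is_clique e [set w in S | e s w].

Lemma simplicial_nbr_closed (S S' : {set T}) s :
  {in S, forall w, e s w -> w \in S'} -> simplicial S' s -> simplicial S s.
Proof.
move=> nbr; apply: clique_subset; apply/subsetP => w.
by rewrite !inE => /andP[wS esw]; rewrite nbr.
Qed.

Definition earlier_nbrs (ord : T -> nat) (v : T) : {set T} := [set w | e v w & ord w < ord v].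

Lemma earlier_nbrs_card_lt (ord : T -> nat) v : symmetric e -> irreflexive e ->
  is_clique e (earlier_nbrs ord v) -> #|earlier_nbrs ord v| < clique_number e.
Proof.
move=> e_sym e_irr Ec; have vE : v \notin earlier_nbrs ord v by rewrite inE e_irr.
suff : #|v |: earlier_nbrs ord v| <= clique_number e by rewrite cardsU1 vE.
apply: clique_card_le; apply/cliqueP => x y.
rewrite !in_setU1 => /predU1P[-> | xE] /predU1P[-> | yE]; rewrite ?eqxx //.
- by move: yE; rewrite inE => /andP[].
- by move: xE; rewrite inE e_sym => /andP[].
- exact: clique_adj Ec xE yE.
Qed.

End Graphs.

Section ChordalGraphs.
Variables (T : finType) (e : rel T).
Hypotheses (e_sym : symmetric e) (e_irr : irreflexive e) (e_chordal : chordal e).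

(* [b :: t] is a cycle of length at least 4; its chord cannot meet [b], so it joins
   two vertices of [t] that are not consecutive. *)
Lemma chordal_path_skip_chord (b : T) (t : seq T) :
  sorted e t -> uniq (b :: t) -> 2 < size t -> e b (head b t) -> e b (last b t) ->
  {in t, forall z, e b z -> (z == head b t) || (z == last b t)} ->
  exists t1 u w t3 v t4, t = t1 ++ [:: u, w & t3 ++ v :: t4] /\ e u v.
Proof.
move=> st Ubt t_gt2 ebh ebl b_nbr.
have skip t1 u t2 v : t = t1 ++ u :: t2 -> v \in t2 -> v != head b t2 -> e u v ->
    exists t1 u w t3 v t4, t = t1 ++ [:: u, w & t3 ++ v :: t4] /\ e u v.
  case: t2 => [//|w t2] Et; rewrite inE => /predU1P[-> | vt2]; first by rewrite eqxx.
  by move=> _ euv; case/splitPr: vt2 Et => t3 t4 Et; exists t1, u, w, t3, v, t4.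
have cyc : is_graph_cycle e (b :: t).
  rewrite /is_graph_cycle Ubt /= rcons_path e_sym ebl andbT.
  by case: (t) st ebh => //= x t' -> ->.
have [u [v /and5P[ubt vbt uv euv /andP[v_next u_next]]]] := e_chordal cyc t_gt2.
have chord_avoids_b x y : y \in b :: t -> x != y -> e x y ->
    y != next (b :: t) x -> x != next (b :: t) y -> x != b.
  move=> ybt xy exy y_next x_next; apply/eqP => xb; subst x.
  have yt : y \in t by move: ybt; rewrite inE eq_sym (negbTE xy).
  case/orP: (b_nbr y yt exy) => /eqP yE.
    by move: y_next; rewrite next_head yE eqxx.
  by move: x_next; rewrite yE next_last ?eqxx //; case: (t) yt.
have ut : u \in t.
  by move: ubt; rewrite inE (negbTE (chord_avoids_b u v vbt uv euv v_next u_next)).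
have vt : v \in t.
  have vb : v != b by apply: (chord_avoids_b v u); rewrite // 1?eq_sym 1?e_sym.
  by move: vbt; rewrite inE (negbTE vb).
have [t1 [t2 Et]] : exists t1 t2, t = t1 ++ u :: t2.
  by case/splitPr: ut => t1 t2; exists t1, t2.
rewrite Et in Ubt v_next u_next vt.
rewrite mem_cat in_cons eq_sym (negbTE uv) /= in vt.
case/orP: vt => [vt1 | vt2]; last first.
  by apply: (skip t1 u t2 v) => //; rewrite -(next_cat_cons Ubt).
case/splitPr: vt1 Et Ubt u_next => t1a t1b; rewrite -catA /= => Et Ubt u_next.
apply: (skip t1a v (t1b ++ u :: t2) u Et); first by rewrite mem_cat mem_head orbT.
- by rewrite -(next_cat_cons Ubt).
- by rewrite e_sym.
Qed.

Lemma chordal_path_ends_adj (b : T) (t : seq T) :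
  sorted e t -> uniq (b :: t) -> 1 < size t -> e b (head b t) -> e b (last b t) ->
  {in t, forall z, e b z -> (z == head b t) || (z == last b t)} ->
  e (head b t) (last b t).
Proof.
have [n] := ubnP (size t); elim: n t => // n IH t.
rewrite ltnS => szt st Ubt t_gt1 ebh ebl b_nbr.
have [t_le2 | t_gt2] := leqP (size t) 2.
  have [x [y Et]] : exists x y, t = [:: x; y].
    by case: (t) t_gt1 t_le2 => [|x [|y []]] // _ _; exists x, y.
  by move: st; rewrite Et /= andbT.
have [t1 [u [w [t3 [v [t4 [Et euv]]]]]]] := chordal_path_skip_chord st Ubt t_gt2 ebh ebl b_nbr.
pose t' := t1 ++ [:: u, v & t4].
have hd : head b t' = head b t by rewrite Et /t'; case: (t1).
have ls : last b t' = last b t by rewrite Et !last_cat /= last_cat.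
have sub : subseq t' t.
  rewrite Et cat_subseq //= eqxx; have := suffix_subseq t3 (v :: t4).
  by case: ifP => // _; apply: subseq_trans (subseq_cons t4 v).
rewrite -hd -ls; apply: IH.
- by move: szt; rewrite Et /t' !size_cat /= size_cat /=; lia.
- by move: st euv; rewrite Et; exact: (sorted_shortcut (t2 := w :: t3)).
- by apply: subseq_uniq Ubt; rewrite /= eqxx.
- by rewrite /t' size_cat /=; lia.
- by rewrite hd.
- by rewrite ls.
- by move=> z /(mem_subseq sub) zt; rewrite hd ls; apply: b_nbr.
Qed.

Lemma chordal_nbrs_joined_adj (U : {set T}) (b x y w w' : T) :
  b \notin U -> {in U, forall z, ~~ e b z} -> e b x -> e b y -> x != y ->
  w \in U -> connect (induced e U) w w' -> e x w -> e y w' -> e x y.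
Proof.
move=> bU Ub ebx eby xy wU /connectP[p pU ->] exw eyw.
have pe : path e x (w :: rcons p y).
  rewrite /= exw rcons_path e_sym eyw andbT.
  by apply: sub_path pU => ? ? /and3P[].
have p_in_U : {subset w :: p <= U}.
  by move=> z /(path_connect pU) /(connect_induced_in wU).
have : last x (w :: rcons p y) = y by rewrite /= last_rcons.
case: (shortenP pe) => p' pe' up' sub' last_p'.
have p'_sub z : z \in p' -> (z == y) || (z \in U).
  move=> /sub'; rewrite -cats1 -cat_cons mem_cat mem_seq1 orbC.
  by case/orP=> [-> // | /p_in_U ->]; rewrite orbT.
have b_neq z : e b z -> b != z by apply: contraTneq => <-; rewrite e_irr.
have bp' : b \notin p'.
  apply/negP => /p'_sub /orP[/eqP by_ | bU']; last by rewrite bU' in bU.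
  by move: (b_neq y eby); rewrite by_ eqxx.
have := chordal_path_ends_adj (b := b) (t := x :: p') pe'; rewrite /= last_p'.
apply=> //.
- by apply/andP; split; [rewrite inE negb_or b_neq | exact: up'].
- by case: (p') last_p' => //= yx; rewrite yx eqxx in xy.
- move=> z; rewrite inE => /predU1P[-> | /p'_sub /orP[-> | zU]]; rewrite ?eqxx ?orbT //.
  by rewrite (negbTE (Ub z zU)).
Qed.

Definition far_component (S : {set T}) (b a : T) : {set T} :=
  [set w | connect (induced e [set z in S | (z != b) && ~~ e b z]) a w].

Section FarComponent.
Variables (S : {set T}) (b a : T).
Hypotheses (aS : a \in S) (bS : b \in S) (ab : a != b) (nba : ~~ e b a).
Let U := [set z in S | (z != b) && ~~ e b z].
Let A := far_component S b a.
Let B := boundary e S A.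

Let aU : a \in U. Proof. by rewrite inE aS ab. Qed.

Let A_U w : w \in A -> [&& w \in S, w != b & ~~ e b w].
Proof. by rewrite inE => /(connect_induced_in aU); rewrite inE. Qed.

Let aA : a \in A. Proof. by rewrite inE connect0. Qed.

Let bA : b \notin A. Proof. by apply/negP => /A_U; rewrite eqxx andbF. Qed.

Let B_SA : B \subset S :\: A. Proof. by apply/subsetP => w; rewrite inE => /andP[]. Qed.

Lemma boundary_far_component_nbr x : x \in B -> e b x.
Proof.
rewrite !inE => /andP[/andP[xA xS] /exists_inP[w wA ewx]].
have /and3P[_ _ nebw] := A_U wA.
apply: contraNT xA => nebx.
have xb : x != b by apply: contraNneq nebw => xb; rewrite -xb e_sym.
have wU : w \in U by rewrite inE; exact: A_U.
have xU : x \in U by rewrite inE xS xb.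
rewrite inE in wA *; apply: (connect_trans wA); apply: connect1.
by rewrite /induced /= wU xU ewx.
Qed.

Let bB : b \notin B. Proof. by apply/negP => /boundary_far_component_nbr; rewrite e_irr. Qed.

Lemma boundary_far_component_clique : is_clique e B.
Proof.
apply/cliqueP => x y xB yB xy.
have ebx := boundary_far_component_nbr xB; have eby := boundary_far_component_nbr yB.
move: xB yB; rewrite !inE => /andP[_ /exists_inP[wx wxA ewx]] /andP[_ /exists_inP[wy wyA ewy]].
have induced_sym : symmetric (induced e U).
  by move=> u v; rewrite /induced /= e_sym andbCA.
have wxU : wx \in U by rewrite inE; exact: A_U.
have wx_wy : connect (induced e U) wx wy.
  move: wxA wyA; rewrite !inE => awx; apply: connect_trans.
  by rewrite (sym_connect_sym induced_sym).
rewrite e_sym in ewx; rewrite e_sym in ewy.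
apply: (chordal_nbrs_joined_adj _ _ ebx eby xy wxU wx_wy ewx ewy).
- by rewrite inE eqxx andbF.
- by move=> z; rewrite inE => /and3P[].
Qed.

Lemma far_setU_boundary_proper : A :|: B \proper S.
Proof.
apply/properP; split; last by exists b; rewrite // inE negb_or bA.
by apply/subsetP => w; rewrite inE => /orP[/A_U/andP[] | /(subsetP B_SA)/setDP[]].
Qed.

Lemma boundary_proper_far_setU : B \proper A :|: B.
Proof.
apply/properP; split; first exact: subsetUr.
by exists a; [rewrite inE aA | apply: contraL aA => /(subsetP B_SA)/setDP[]].
Qed.

Lemma setD_far_proper : S :\: A \proper S.
Proof. by apply/properP; split; [exact: subsetDl | exists a; rewrite // in_setD aA]. Qed.

Lemma boundary_proper_setD_far : B \proper S :\: A.
Proof. by apply/properP; split => //; exists b; rewrite // inE bA. Qed.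

Lemma simplicial_far_setU s : s \in A -> simplicial e (A :|: B) s -> simplicial e S s.
Proof.
move=> sA; apply: simplicial_nbr_closed => w wS esw.
rewrite in_setU; case wA: (w \in A) => //=.
exact: mem_boundary wS (negbT wA) sA esw.
Qed.

Lemma simplicial_setD_far s :
  s \in S :\: A -> s \notin B -> simplicial e (S :\: A) s -> simplicial e S s.
Proof.
move=> /setDP[sS sA] sB; apply: simplicial_nbr_closed => w wS esw; rewrite inE wS andbT.
by apply: contraNN sB => wA; apply: (mem_boundary sS sA wA); rewrite e_sym.
Qed.

End FarComponent.

(* Dirac's lemma, strengthened for the induction: the boundary [B] of a far
   component [A] is a clique, both [A :|: B] and [S :\: A] contain a simplicial
   vertex off [B], and these two are non-adjacent, so one of them avoids [K]. *)
Lemma exists_simplicial_off_clique (S K : {set T}) :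
  is_clique e K -> K \proper S -> exists2 s, s \in S :\: K & simplicial e S s.
Proof.
have [n] := ubnP #|S|; elim: n S K => // n IH S K; rewrite ltnS => szS Kc KS.
have {}IH (S' K' : {set T}) : S' \proper S -> is_clique e K' -> K' \proper S' ->
    exists2 s, s \in S' :\: K' & simplicial e S' s.
  by move=> /proper_card S'S; apply: IH; apply: leq_trans szS.
have [x xSK] : exists x, x \in S :\: K.
  by case/properP: KS => _ [x xS xK]; exists x; rewrite inE xK.
have [Sc | /forall_inPn[a aS /forall_inPn[b bS]]] := boolP (is_clique e S).
  by exists x => //; apply: clique_subset Sc; apply/subsetP => w; rewrite inE => /andP[].
rewrite negb_imply => /andP[ab nab]; have nba : ~~ e b a by rewrite e_sym.
pose A := far_component S b a; pose B := boundary e S A.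
have Bc : is_clique e B by apply: boundary_far_component_clique.
have [s1 /setDP[s1AB s1B] s1_simpl] :
    exists2 s, s \in (A :|: B) :\: B & simplicial e (A :|: B) s.
  by apply: (IH _ _ _ Bc); [apply: far_setU_boundary_proper | apply: boundary_proper_far_setU].
have s1A : s1 \in A by case/setUP: s1AB => // s1B'; rewrite s1B' in s1B.
have ABS : A :|: B \subset S by apply: proper_sub; apply: far_setU_boundary_proper.
have s1S : s1 \in S := subsetP ABS s1 s1AB.
have {}s1_simpl : simplicial e S s1 by apply: (simplicial_far_setU (b := b) (a := a)).
have [s2 /setDP[s2SA s2B] s2_simpl] :
    exists2 s, s \in (S :\: A) :\: B & simplicial e (S :\: A) s.
  by apply: (IH _ _ _ Bc); [apply: setD_far_proper | apply: boundary_proper_setD_far].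
have {}s2_simpl : simplicial e S s2 by apply: (simplicial_setD_far (b := b) (a := a)).
have /setDP[s2S s2A] := s2SA.
have ne12 : ~~ e s1 s2 by apply: contraNN s2B => /(mem_boundary s2S s2A s1A).
have [s1K | s1K] := boolP (s1 \in K); last by exists s1; rewrite // inE s1K.
have [s2K | s2K] := boolP (s2 \in K); last by exists s2; rewrite // inE s2K.
have s12 : s1 != s2 by apply: contraNneq s2A => <-.
by rewrite (clique_adj Kc s1K s2K s12) in ne12.
Qed.

Lemma chordal_perfect_elimination :
  exists ord : T -> nat, injective ord /\ forall v, is_clique e (earlier_nbrs e ord v).
Proof.
suff /(_ [set: T]) [ord [ord_inj peo]] (S : {set T}) : exists ord : T -> nat, injective ord /\
    {in S, forall v, is_clique e [set w in S | e v w & ord w < ord v]}.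
  exists ord; split => // v; apply: clique_subset (peo v (in_setT v)).
  by apply/subsetP => w; rewrite !inE.
have [n] := ubnP #|S|; elim: n S => // n IH S; rewrite ltnS => szS.
have [-> | S_neq0] := eqVneq S set0.
  by exists (fun v => val (enum_rank v)); split => [x y /val_inj/enum_rank_inj | v]; rewrite ?inE.
have S_proper0 : set0 \proper S by rewrite proper0.
have [s /setDP[sS _] s_simpl] := exists_simplicial_off_clique (clique_set0 e) S_proper0.
have [|ord [ord_inj peo]] := IH (S :\ s); first by move: szS; rewrite (cardsD1 s S) sS.
pose top := (\max_w ord w).+1.
have ord_lt_top w : ord w < top by rewrite ltnS leq_bigmax.
exists (fun v => if v == s then top else ord v); split.
  move=> x y /=; case: eqVneq => [-> | xs]; case: eqVneq => [-> | ys] // E.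
  - by have := ord_lt_top y; rewrite -E ltnn.
  - by have := ord_lt_top x; rewrite E ltnn.
  - exact: ord_inj.
move=> v vS; case: eqVneq => [-> | vs].
  by apply: clique_subset s_simpl; apply/subsetP => w; rewrite !inE => /and3P[-> ->].
apply: clique_subset (peo v _); last by rewrite !inE vs.
apply/subsetP => w; rewrite !inE; case: eqVneq => [-> | ws] /=; last by move=> /and3P[-> -> ->].
by rewrite ltnNge ltnW ?andbF.
Qed.

End ChordalGraphs.

Lemma exists_lt_notin (s : seq nat) (m : nat) : size s < m -> exists2 j, j < m & j \notin s.
Proof.
move=> szs; have [/allP iota_sub | /allPn[j]] := boolP (all (mem s) (iota 0 m)).
  by have := uniq_leq_size (iota_uniq 0 m) iota_sub; rewrite size_iota leqNgt szs.
by rewrite mem_iota => j_lt j_notin; exists j.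
Qed.

Section GreedyColouring.
Variables (T : finType) (e : rel T) (ord : T -> nat) (m : nat).
Hypotheses (e_sym : symmetric e) (e_irr : irreflexive e) (ord_inj : injective ord).
Hypothesis earlier_lt : forall v, #|earlier_nbrs e ord v| < m.

Lemma greedy_colouring :
  exists c : T -> nat, (forall v, c v < m) /\ (forall u v, e u v -> c u != c v).
Proof.
suff [c [c_lt c_ok]] : exists c : T -> nat,
    {in [pred v | ord v < (\max_v ord v).+1], forall v, c v < m} /\
    {in [pred v | ord v < (\max_v ord v).+1] &, forall u v, e u v -> c u != c v}.
  have lt_max v : v \in [pred v | ord v < (\max_v ord v).+1] by rewrite inE ltnS leq_bigmax.
  by exists c; split => [v | u v]; [apply: c_lt | apply: c_ok].
elim: (\max_v ord v).+1 => [|k [c [c_lt c_ok]]]; first by exists (fun=> 0).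
have [s /eqP sk | no_k] := pickP [pred s | ord s == k]; last first.
  have lt v : ord v < k.+1 -> ord v < k by rewrite ltnS leq_eqVlt (no_k v : (ord v == k) = false).
  by exists c; split => [v /lt | u v /lt uk /lt vk]; [apply: c_lt | apply: c_ok].
have old v : ord v < k.+1 -> v != s -> ord v < k.
  by rewrite ltnS leq_eqVlt -sk => /predU1P[/ord_inj -> | //]; rewrite eqxx.
have [j j_lt j_fresh] : exists2 j, j < m & j \notin [seq c w | w <- enum (earlier_nbrs e ord s)].
  by apply: exists_lt_notin; rewrite size_map -cardE.
have used v : ord v < k -> e s v -> c v \in [seq c w | w <- enum (earlier_nbrs e ord s)].
  by move=> vk esv; apply: map_f; rewrite mem_enum inE esv sk.
exists (fun v => if v == s then j else c v); split.
  by move=> v /old; case: eqVneq => // _ /(_ isT); apply: c_lt.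
move=> u v uk vk euv; have [us | us] := eqVneq u s; have [vs | vs] := eqVneq v s.
- by rewrite us vs e_irr in euv.
- by apply: contraNneq j_fresh => ->; rewrite used ?old // -us.
- by apply: contraNneq j_fresh => <-; rewrite used ?old // -vs e_sym.
- exact: c_ok (old u uk us) (old v vk vs) euv.
Qed.

End GreedyColouring.

Section FconnectOrder.
Variables (T : finType) (f : T -> T).

Lemma fconnect_total x y z : fconnect f x y -> fconnect f x z -> fconnect f y z || fconnect f z y.
Proof.
move=> /iter_findex <- /iter_findex <-.
case: (leqP (findex f x y) (findex f x z)) => [le | /ltnW le].
  by rewrite -(subnK le) iterD fconnect_iter.
by rewrite -(subnK le) iterD fconnect_iter orbT.
Qed.

Lemma fconnect_fixed x y : f x = x -> fconnect f x y -> y = x.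
Proof.
move=> fx /iter_findex <-; elim: (findex f x y) => //= n ->; exact: fx.
Qed.

Variable ord : T -> nat.
Hypotheses (ord_inj : injective ord) (f_le : forall v, ord (f v) <= ord v).

Lemma fconnect_ord_le x y : fconnect f x y -> ord y <= ord x.
Proof.
move=> /iter_findex <-; elim: (findex f x y) => //= n IH; exact: leq_trans (f_le _) IH.
Qed.

Lemma fconnect_ord_lt x y : fconnect f x y -> y != x -> ord y < ord x.
Proof.
move=> /fconnect_ord_le; rewrite leq_eqVlt => /predU1P[/ord_inj -> | //].
by rewrite eqxx.
Qed.

End FconnectOrder.

Section EliminationForest.
Variables (T : finType) (e : rel T) (ord : T -> nat).
Hypotheses (e_sym : symmetric e) (ord_inj : injective ord).
Hypothesis peo : forall v, is_clique e (earlier_nbrs e ord v).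

Definition parent (v : T) : T :=
  odflt v [pick w in earlier_nbrs e ord v | [forall w' in earlier_nbrs e ord v, ord w' <= ord w]].

Variant parent_spec (v : T) : T -> Prop :=
  | ParentRoot of earlier_nbrs e ord v = set0 : parent_spec v v
  | ParentLatest w of w \in earlier_nbrs e ord v &
      {in earlier_nbrs e ord v, forall w', ord w' <= ord w} : parent_spec v w.

Lemma parentP v : parent_spec v (parent v).
Proof.
rewrite /parent; case: pickP => [w /andP[wE /forall_inP w_max] | none] /=.
  exact: ParentLatest.
apply: ParentRoot; apply/setP => w; rewrite in_set0; apply/negbTE/negP => wE.
have [w' w'E w'_max] := arg_maxnP ord wE.
have := none w'; rewrite /= (w'E : w' \in _) => /negbT/forall_inPn[w'' /w'_max le].
by case/negP; exact: le.
Qed.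

Lemma parent_le v : ord (parent v) <= ord v.
Proof. by case: parentP => // w; rewrite inE => /andP[_ /ltnW]. Qed.

Lemma parent_lt v : parent v != v -> ord (parent v) < ord v.
Proof. by case: parentP => [|w]; rewrite ?eqxx // inE => /andP[]. Qed.

Lemma earlier_nbr_ancestor u v : e u v -> ord u < ord v -> fconnect parent v u.
Proof.
have [n] := ubnP (ord v); elim: n v => // n IH v; rewrite ltnS => vn euv uv.
have uE : u \in earlier_nbrs e ord v by rewrite inE e_sym euv uv.
rewrite fconnect_eqVf; case: parentP => [E0 | p pE p_max]; first by rewrite E0 inE in uE.
have [<- | up] := eqVneq p u; first by rewrite connect0 orbT.
apply/orP; right; apply: IH.
- by apply: leq_trans vn; move: pE; rewrite inE => /andP[].
- by apply: (clique_adj (peo v)); rewrite // eq_sym.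
- by rewrite ltn_neqAle p_max // andbT; apply: contra_neq up => /ord_inj.
Qed.

Lemma ancestor_adj u v w : e u v -> fconnect parent w u -> fconnect parent v w -> u != w -> e u w.
Proof.
move=> euv wu /iter_findex vw; rewrite -{}vw in wu *.
elim: (findex parent v w) wu => // k IH /=; set w' := iter k parent v => wu uw.
have w'u : fconnect parent w' u := connect_trans (fconnect1 parent w') wu.
have uw' : u != w'.
  apply: contra_neq uw => uw'; rewrite uw' in wu *.
  by apply/ord_inj/eqP; rewrite eqn_leq parent_le (fconnect_ord_le parent_le wu).
have uE : u \in earlier_nbrs e ord w'.
  by rewrite inE e_sym IH // (fconnect_ord_lt ord_inj parent_le w'u).
case: parentP uw => [E0 | p pE _] uw; first by rewrite E0 inE in uE.
exact: (clique_adj (peo w')).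
Qed.

End EliminationForest.

Section ForestIntervals.
Variables (T : finType) (f : T -> T) (ord : T -> nat).
Hypotheses (ord_inj : injective ord) (f_lt : forall v, f v != v -> ord (f v) < ord v).

Let f_le v : ord (f v) <= ord v.
Proof. by have [-> // | /f_lt/ltnW] := eqVneq (f v) v. Qed.

Definition nested_upto (k : nat) (l r : T -> nat) :=
  [/\ {in [pred v | ord v < k], forall v, l v <= r v},
      {in [pred v | ord v < k] &, forall u v, fconnect f v u -> l u <= l v /\ r v <= r u},
      {in [pred v | ord v < k] &, forall u v, fconnect f v u -> u != v -> l u < l v} &
      {in [pred v | ord v < k] &, forall u v,
         ~~ fconnect f v u -> ~~ fconnect f u v -> (r u < l v) || (r v < l u)}].

Section AddLeaf.
Variables (k : nat) (l r : T -> nat) (s : T).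
Hypotheses (sk : ord s = k) (lr : nested_upto k l r).

(* Scaling the old endpoints by 3 makes room for the new leaf [s]: it becomes the
   point [3 l (f s) + 1], inside the interval of its parent but strictly left of
   those of the other descendants of [f s]; a new root goes right of everything. *)
Let ls := if f s == s then (3 * \max_w r w).+3 else (3 * l (f s)).+1.
Let l' v := if v == s then ls else 3 * l v.
Let r' v := if v == s then ls else (3 * r v).+2.

Let l'E v : v != s -> l' v = 3 * l v. Proof. by rewrite /l' => /negbTE ->. Qed.
Let r'E v : v != s -> r' v = (3 * r v).+2. Proof. by rewrite /r' => /negbTE ->. Qed.

Let old v : ord v < k.+1 -> v != s -> ord v < k.
Proof. by rewrite ltnS leq_eqVlt -sk => /predU1P[/ord_inj -> | //]; rewrite eqxx. Qed.

Let neq_s v : ord v < k -> v != s. Proof. by apply: contraTneq => ->; rewrite sk ltnn. Qed.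

Let fs_lt : f s != s -> ord (f s) < k. Proof. by rewrite -sk; apply: f_lt. Qed.

Let s_anc u : ord u < k -> fconnect f s u -> f s != s /\ fconnect f (f s) u.
Proof.
move=> /neq_s us su.
have fs : f s != s by apply: contra_neq us => fs; rewrite (fconnect_fixed fs su).
by split; move: su; rewrite // fconnect_eqVf eq_sym (negbTE us).
Qed.

Let new_anc u : ord u < k -> fconnect f s u -> l' u < l' s /\ r' s <= r' u.
Proof.
case: lr => lr1 lr2 _ _ uk /(s_anc uk) [fs fsu].
rewrite /l' /r' eqxx (negbTE (neq_s uk)) /ls (negbTE fs).
have [] := lr2 u (f s) uk (fs_lt fs) fsu; have := lr1 (f s) (fs_lt fs); lia.
Qed.

Let new_unrel u : ord u < k -> ~~ fconnect f s u -> (r' u < l' s) || (r' s < l' u).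
Proof.
case: lr => lr1 _ lr3 lr4 uk nsu; rewrite /l' /r' eqxx (negbTE (neq_s uk)) /ls.
have [fs | fs] := eqVneq (f s) s; first by have : r u <= \max_w r w := leq_bigmax u; lia.
have nfsu : ~~ fconnect f (f s) u.
  by apply: contraNN nsu; apply: connect_trans (fconnect1 f s).
have [ufs | nufs] := boolP (fconnect f u (f s)).
  have fsu : f s != u by apply: contraNneq nfsu => ->; apply: connect0.
  by have := lr3 (f s) u (fs_lt fs) uk ufs fsu; lia.
by have := lr1 (f s) (fs_lt fs); case/orP: (lr4 u (f s) uk (fs_lt fs) nfsu nufs); lia.
Qed.

Lemma nested_upto_add_leaf : exists l1 r1, nested_upto k.+1 l1 r1.
Proof.
case: lr => lr1 lr2 lr3 lr4; exists l', r'; split.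
- move=> v vk; have [-> | vs] := eqVneq v s; first by rewrite /l' /r' eqxx.
  by rewrite l'E // r'E //; have := lr1 v (old vk vs); lia.
- move=> u v uk vk vu; have [us | us] := eqVneq u s; have [vs | vs] := eqVneq v s.
  + by rewrite us vs.
  + by have := fconnect_ord_le f_le vu; rewrite us sk leqNgt old.
  + by move: vu; rewrite vs => /(new_anc (old uk us)) [/ltnW].
  + by rewrite !l'E // !r'E //; have := lr2 u v (old uk us) (old vk vs) vu; lia.
- move=> u v uk vk vu; have [us | us] := eqVneq u s; have [vs | vs] := eqVneq v s.
  + by rewrite us vs eqxx.
  + by have := fconnect_ord_le f_le vu; rewrite us sk leqNgt old.
  + by move: vu; rewrite vs => /(new_anc (old uk us)) [].
  + by rewrite !l'E //; have := lr3 u v (old uk us) (old vk vs) vu; lia.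
- move=> u v uk vk nvu nuv; have [us | us] := eqVneq u s; have [vs | vs] := eqVneq v s.
  + by rewrite us vs connect0 in nvu.
  + by rewrite orbC us; apply: new_unrel (old vk vs) _; rewrite -us.
  + by rewrite vs; apply: new_unrel (old uk us) _; rewrite -vs.
  + rewrite !l'E // !r'E //.
    by case/orP: (lr4 u v (old uk us) (old vk vs) nvu nuv); lia.
Qed.

End AddLeaf.

Lemma forest_intervals : exists l r : T -> nat,
  [/\ forall v, l v <= r v,
      forall u v, fconnect f v u -> l u <= l v /\ r v <= r u &
      forall u v, ~~ fconnect f v u -> ~~ fconnect f u v -> (r u < l v) || (r v < l u)].
Proof.
have [l [r [lr1 lr2 _ lr4]]] : exists l r, nested_upto (\max_v ord v).+1 l r.
  elim: (\max_v ord v).+1 => [|k [l [r lr]]]; first by exists ord, ord; split.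
  have [s /eqP sk | no_k] := pickP [pred s | ord s == k]; first exact: nested_upto_add_leaf sk lr.
  have lt v : ord v < k.+1 -> ord v < k by rewrite ltnS leq_eqVlt (no_k v : (ord v == k) = false).
  case: lr => lr1 lr2 lr3 lr4; exists l, r; split.
  - by move=> v /lt; apply: lr1.
  - by move=> u v /lt uk /lt vk; apply: lr2.
  - by move=> u v /lt uk /lt vk; apply: lr3.
  - by move=> u v /lt uk /lt vk; apply: lr4.
have lt_max v : v \in [pred v | ord v < (\max_v ord v).+1] by rewrite inE ltnS leq_bigmax.
by exists l, r; split => [v | u v | u v]; [apply: lr1 | apply: lr2 | apply: lr4].
Qed.

End ForestIntervals.

Section BoxRepresentation.
Variables (T : finType) (e : rel T) (ord : T -> nat) (c : T -> nat) (m : nat).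
Hypotheses (e_sym : symmetric e) (e_irr : irreflexive e) (ord_inj : injective ord).
Hypothesis peo : forall v, is_clique e (earlier_nbrs e ord v).
Hypotheses (c_lt : forall v, c v < m) (c_proper : forall u v, e u v -> c u != c v).
Variables l0 r0 : T -> nat.
Hypotheses (lr0 : forall v, l0 v <= r0 v)
  (lr0_nested : forall u v, fconnect (parent e ord) v u -> l0 u <= l0 v /\ r0 v <= r0 u)
  (lr0_disjoint : forall u v, ~~ fconnect (parent e ord) v u ->
     ~~ fconnect (parent e ord) u v -> (r0 u < l0 v) || (r0 v < l0 u)).

(* Coordinate [0] is the forest interval and coordinate [k.+1] is the one attached
   to colour [k]; the earlier neighbour of colour [k] is unique because earlier
   neighbourhoods are cliques. *)
Definition colour_anchor (v : T) (k : nat) : T :=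
  odflt v [pick u in earlier_nbrs e ord v | c u == k].

Definition box_lo (v : T) (i : nat) : nat :=
  if i is k.+1 then ord (colour_anchor v k) else l0 v.

Definition box_hi (v : T) (i : nat) : nat :=
  if i is k.+1 then (if c v == k then ord v else \max_w ord w) else r0 v.

Lemma colour_anchor_le v k : ord (colour_anchor v k) <= ord v.
Proof. by rewrite /colour_anchor; case: pickP => //= u; rewrite !inE => /andP[/andP[_ /ltnW]]. Qed.

Lemma colour_anchor_earlier u v : u \in earlier_nbrs e ord v -> colour_anchor v (c u) = u.
Proof.
move=> uE; rewrite /colour_anchor; case: pickP => [w /andP[wE /eqP cw] | none] /=.
  have [// | wu] := eqVneq w u.
  by have := c_proper (clique_adj (peo v) wE uE wu); rewrite cw eqxx.
by have := none u; rewrite uE eqxx.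
Qed.

Lemma box_lo_le_hi v i : box_lo v i <= box_hi v i.
Proof.
case: i => [|k] //=; apply: leq_trans (colour_anchor_le v k) _.
by case: ifP => // _; apply: leq_bigmax.
Qed.

Lemma boxes_meet_lt u v i : e u v -> ord u < ord v ->
  box_lo u i <= box_hi v i /\ box_lo v i <= box_hi u i.
Proof.
move=> euv uv; case: i => [|k] /=.
  have [] := lr0_nested (earlier_nbr_ancestor e_sym ord_inj peo euv uv).
  by have := lr0 u; have := lr0 v; lia.
split.
  apply: leq_trans (colour_anchor_le u k) (leq_trans (ltnW uv) _).
  by case: ifP => // _; apply: leq_bigmax.
have [/eqP <- | _] := boolP (c u == k); last exact: leq_bigmax.
by rewrite colour_anchor_earlier // inE e_sym euv.
Qed.

Lemma boxes_meet u v i : e u v -> box_lo u i <= box_hi v i.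
Proof.
move=> euv; have uv : ord u != ord v by apply: contraTneq euv => /ord_inj ->; rewrite e_irr.
case: (ltngtP (ord u) (ord v)) uv => [uv | vu | _] //= _.
  by case: (boxes_meet_lt i euv uv).
by rewrite e_sym in euv; case: (boxes_meet_lt i euv vu).
Qed.

Lemma boxes_separate_lt u v : ~~ e u v -> ord u < ord v ->
  exists2 i, i < m.+1 & (box_hi u i < box_lo v i) || (box_hi v i < box_lo u i).
Proof.
move=> neuv uv.
have [vu | nvu] := boolP (fconnect (parent e ord) v u); last first.
  have nuv : ~~ fconnect (parent e ord) u v.
    by apply: contraTN uv => /(fconnect_ord_le (parent_le e ord)); rewrite -leqNgt.
  by exists 0 => //=; apply: lr0_disjoint.
exists (c u).+1; first by rewrite ltnS.
apply/orP; left; rewrite /= eqxx /colour_anchor.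
case: pickP => [w /andP[wE /eqP cw] | _] //=.
have /andP[evw wv] : e v w && (ord w < ord v) by rewrite inE in wE.
have wu : w != u by apply: contraNneq neuv => <-; rewrite e_sym.
have vw : fconnect (parent e ord) v w.
  by apply: earlier_nbr_ancestor wv; rewrite // e_sym.
case/orP: (fconnect_total vu vw) => [uw | wu'].
  have ewu : e w u by apply: (ancestor_adj e_sym ord_inj peo (v := v)); rewrite // e_sym.
  by have := c_proper ewu; rewrite cw eqxx.
by apply: (fconnect_ord_lt ord_inj (parent_le e ord)); rewrite // eq_sym.
Qed.

Lemma boxes_separate u v : u != v -> ~~ e u v ->
  exists2 i, i < m.+1 & (box_hi u i < box_lo v i) || (box_hi v i < box_lo u i).
Proof.
move=> uv neuv; have ord_uv : ord u != ord v by apply: contra_neq uv => /ord_inj.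
case: (ltngtP (ord u) (ord v)) ord_uv => [lt | gt | _] //= _; first exact: boxes_separate_lt.
rewrite e_sym in neuv; have [i i_lt sep] := boxes_separate_lt neuv gt.
by exists i; rewrite // orbC.
Qed.

Lemma peo_box_representation (R : realType) : has_box_dim e R m.+1.
Proof.
exists (fun v (i : 'I_m.+1) => (box_lo v i)%:R%R), (fun v (i : 'I_m.+1) => (box_hi v i)%:R%R).
split=> [v i | u v uv]; first by rewrite ler_nat box_lo_le_hi.
split=> [euv i | meet].
  by rewrite !ler_nat !boxes_meet // e_sym.
have [// | neuv] := boolP (e u v); have [i i_lt] := boxes_separate uv neuv.
by have [] := meet (Ordinal i_lt); rewrite !ler_nat /= !ltnNge => -> ->.
Qed.

End BoxRepresentation.

Lemma chordal_box_dim (R : realType) (T : finType) (e : rel T) :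
  symmetric e -> irreflexive e -> chordal e -> has_box_dim e R (clique_number e).+1.
Proof.
move=> e_sym e_irr e_chordal.
have [ord [ord_inj peo]] := chordal_perfect_elimination e_sym e_irr e_chordal.
have E_lt v := earlier_nbrs_card_lt e_sym e_irr (peo v).
have [c [c_lt c_proper]] := greedy_colouring e_sym e_irr ord_inj E_lt.
have [l0 [r0 [lr0 lr0_nested lr0_disjoint]]] := forest_intervals ord_inj (@parent_lt _ e ord).
exact: (peo_box_representation e_sym e_irr ord_inj peo c_lt c_proper lr0 lr0_nested lr0_disjoint).
Qed.

Unset Implicit Arguments.

Theorem theorem5 (R : realType) (T : finType) (e : rel T)
    (e_sym : symmetric e) (e_irr : irreflexive e) :
  chordal e ->
  boxicity_le e R (clique_number e).+1 /\
  (clique_number e).+1 <= (max_degree e).+2.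
Proof.
move=> e_chordal; split; last by rewrite ltnS clique_number_le_max_degree.
by exists (clique_number e).+1; split => //; apply: chordal_box_dim.
Qed.
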